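(* Assume the standing setting and let $\epsilon>0$. If $|u^0_i-u^0_{i+1}|\le \epsilon/3^{M}$ for all $i\in\mathbb Z$, then for every $j\in\mathbb Z$, $|w^N_j-w^N_{j+1}|\le\epsilon$ (i.e. $|d_1-d_2|\le\epsilon$ with $d_1=w^N_j$, $d_2=w^N_{j+1}$).
   Context: Standing setting. Let $F:\mathbb R\to\mathbb R$ be continuously differentiable. For a spatial step $\eta>0$, a time step $\tau>0$ and an initial sequence $(z^0_i)_{i\in\mathbb Z}$ of reals, the EFC (Euler forward in time, centered in space) scheme produces $(z^n_i)_{i\in\mathbb Z,\,n\in\mathbb N}$ by $z^{n+1}_i=z^n_i-F'(z^n_i)\frac{\tau}{2\eta}\,(z^n_{i+1}-z^n_{i-1})$. It satisfies the CFL condition if $|F'(z^n_i)|\,\tau/\eta\le 1$ for all $i\in\mathbb Z$, $n\in\mathbb N$. Fix $a\in\mathbb R$, $h>0$, $\Delta t>0$, an integer $N>1$ and an even integer $r\ge 2$; put $k=h/r$, $dt=\Delta t/r$, $M=Nr$. Let $u_0:\mathbb R\to\mathbb R$. The coarse solution $(w^n_j)$ is the EFC scheme with $\eta=h$, $\tau=\Delta t$, $w^0_j=u_0(a+jh)$; the fine solution $(u^n_i)$ is the EFC scheme with $\eta=k$, $\tau=dt$, $u^0_i=u_0(a+ik)$ (so $w^0_j=u^0_{jr}$). Both are assumed to satisfy the CFL condition. *)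

From Stdlib Require Import Reals Lra Lia ZArith.
Open Scope R_scope.

(* EFC scheme (Euler forward in time, centered in space) for the flux with
   derivative dF = F', spatial step eta, time step tau, initial data z0:
   z^{n+1}_i = z^n_i - F'(z^n_i) * tau/(2 eta) * (z^n_{i+1} - z^n_{i-1}). *)
Fixpoint efc (dF : R -> R) (eta tau : R) (z0 : Z -> R) (n : nat) : Z -> R :=
  match n with
  | O => z0
  | S n' => fun i =>
      let z := efc dF eta tau z0 n' in
      z i - dF (z i) * (tau / (2 * eta)) * (z (i + 1)%Z - z (i - 1)%Z)
  end.

Definition CFL (dF : R -> R) (eta tau : R) (z0 : Z -> R) : Prop :=
  forall (n : nat) (i : Z), Rabs (dF (efc dF eta tau z0 n i)) * tau / eta <= 1.

(* Coarse solution: eta = h, tau = Dt, w^0_j = u0(a + j h). *)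
Definition coarse_init (u0 : R -> R) (a h : R) : Z -> R :=
  fun j => u0 (a + IZR j * h).
Definition coarse (dF : R -> R) (u0 : R -> R) (a h Dt : R) : nat -> Z -> R :=
  efc dF h Dt (coarse_init u0 a h).

(* Fine solution: eta = k = h/r, tau = dt = Dt/r, u^0_i = u0(a + i k). *)
Definition fine_init (u0 : R -> R) (a h : R) (r : nat) : Z -> R :=
  fun i => u0 (a + IZR i * (h / INR r)).
Definition fine (dF : R -> R) (u0 : R -> R) (a h Dt : R) (r : nat) : nat -> Z -> R :=
  efc dF (h / INR r) (Dt / INR r) (fine_init u0 a h r).

(* A centered Euler step under the CFL condition has coefficients
   |F'(z_i)| tau / (2 eta) <= 1/2, so it can at most triple the largest jump
   |z_i - z_(i+1)| of a grid function; after N coarse steps the jumps of w grow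
   by at most 3^N.  The coarse initial data sample the fine initial data every
   r points, so each coarse jump is a sum of r fine jumps, bounded by
   r eps / 3^(N r).  Since r 3^N <= 3^(N r), the result follows.  Only the
   initial fine data enter the argument. *)
From Stdlib Require Import Reals ZArith Arith Lra Lia.
Open Scope R_scope.

Lemma centered_update_diff_le (a b c d c1 c2 D : R) :
  Rabs (a - b) <= D -> Rabs (b - c) <= D -> Rabs (c - d) <= D ->
  Rabs c1 <= 1/2 -> Rabs c2 <= 1/2 ->
  Rabs (b - c1 * (c - a) - (c - c2 * (d - b))) <= 3 * D.
Proof.
  intros Hab Hbc Hcd Hc1 Hc2.
  assert (Hca : Rabs (c - a) <= 2 * D).
  { replace (c - a) with (- (a - b) + - (b - c)) by ring.
    eapply Rle_trans; [apply Rabs_triang|]. rewrite !Rabs_Ropp. lra. }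
  assert (Hdb : Rabs (d - b) <= 2 * D).
  { replace (d - b) with (- (b - c) + - (c - d)) by ring.
    eapply Rle_trans; [apply Rabs_triang|]. rewrite !Rabs_Ropp. lra. }
  assert (Ha : Rabs (c1 * (c - a)) <= D).
  { rewrite Rabs_mult. replace D with (1/2 * (2 * D)) by field.
    apply Rmult_le_compat; auto using Rabs_pos. }
  assert (Hd : Rabs (c2 * (d - b)) <= D).
  { rewrite Rabs_mult. replace D with (1/2 * (2 * D)) by field.
    apply Rmult_le_compat; auto using Rabs_pos. }
  replace (b - c1 * (c - a) - (c - c2 * (d - b)))
    with ((b - c) + (- (c1 * (c - a)) + c2 * (d - b))) by ring.
  eapply Rle_trans; [apply Rabs_triang|].
  eapply Rle_trans; [apply Rplus_le_compat_l; apply Rabs_triang|].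
  rewrite Rabs_Ropp. lra.
Qed.

Section EFC_jumps.

Variables (dF : R -> R) (eta tau : R) (z0 : Z -> R).
Hypotheses (heta : 0 < eta) (htau : 0 < tau) (hCFL : CFL dF eta tau z0).

Lemma CFL_coef_le_half (n : nat) (i : Z) :
  Rabs (dF (efc dF eta tau z0 n i) * (tau / (2 * eta))) <= 1/2.
Proof.
  specialize (hCFL n i).
  rewrite Rabs_mult, (Rabs_right (tau / (2 * eta))).
  2: { apply Rle_ge, Rlt_le, Rdiv_lt_0_compat; lra. }
  replace (Rabs (dF (efc dF eta tau z0 n i)) * (tau / (2 * eta)))
    with (Rabs (dF (efc dF eta tau z0 n i)) * tau / eta / 2) by (field; lra).
  lra.
Qed.

Lemma efc_jump_succ_le (n : nat) (D : R) :
  (forall i, Rabs (efc dF eta tau z0 n i - efc dF eta tau z0 n (i + 1)%Z) <= D) ->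
  forall i, Rabs (efc dF eta tau z0 (S n) i - efc dF eta tau z0 (S n) (i + 1)%Z)
              <= 3 * D.
Proof.
  intros HD i; simpl.
  replace (i + 1 + 1)%Z with (i + 2)%Z by ring.
  replace (i + 1 - 1)%Z with i by ring.
  apply centered_update_diff_le; auto using CFL_coef_le_half.
  - replace i with (i - 1 + 1)%Z at 2 by ring. apply HD.
  - replace (i + 2)%Z with (i + 1 + 1)%Z by ring. apply HD.
Qed.

Lemma efc_jump_le_pow3 (D : R) :
  (forall i, Rabs (z0 i - z0 (i + 1)%Z) <= D) ->
  forall n i, Rabs (efc dF eta tau z0 n i - efc dF eta tau z0 n (i + 1)%Z)
                <= 3 ^ n * D.
Proof.
  intros H0 n; induction n as [|n IH]; intro i.
  - simpl. rewrite Rmult_1_l. apply H0.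
  - replace (3 ^ S n * D) with (3 * (3 ^ n * D)) by (simpl; ring).
    now apply efc_jump_succ_le.
Qed.

End EFC_jumps.

Lemma jump_shift_le (f : Z -> R) (d : R) :
  (forall i, Rabs (f i - f (i + 1)%Z) <= d) ->
  forall (m : nat) (i : Z), Rabs (f i - f (i + Z.of_nat m)%Z) <= INR m * d.
Proof.
  intros hf m; induction m as [|m IH]; intro i.
  - simpl. replace (i + 0)%Z with i by ring. rewrite Rminus_diag, Rabs_R0. lra.
  - rewrite S_INR, Nat2Z.inj_succ.
    replace (i + Z.succ (Z.of_nat m))%Z with (i + Z.of_nat m + 1)%Z by lia.
    replace (f i - f (i + Z.of_nat m + 1)%Z)
      with ((f i - f (i + Z.of_nat m)%Z)
            + (f (i + Z.of_nat m)%Z - f (i + Z.of_nat m + 1)%Z)) by ring.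
    eapply Rle_trans; [apply Rabs_triang|].
    specialize (IH i). specialize (hf (i + Z.of_nat m)%Z). lra.
Qed.

Lemma coarse_init_fine_init (u0 : R -> R) (a h : R) (r : nat) (j : Z) :
  (0 < r)%nat -> coarse_init u0 a h j = fine_init u0 a h r (j * Z.of_nat r)%Z.
Proof.
  intro hr. assert (0 < INR r) by (apply lt_0_INR; lia).
  unfold coarse_init, fine_init. f_equal.
  rewrite mult_IZR, <- INR_IZR_INZ. field. lra.
Qed.

Lemma coarse_init_jump_le (u0 : R -> R) (a h : R) (r : nat) (d : R) :
  (0 < r)%nat ->
  (forall i, Rabs (fine_init u0 a h r i - fine_init u0 a h r (i + 1)%Z) <= d) ->
  forall j, Rabs (coarse_init u0 a h j - coarse_init u0 a h (j + 1)%Z) <= INR r * d.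
Proof.
  intros hr hfine j.
  rewrite !(coarse_init_fine_init u0 a h r _ hr).
  replace ((j + 1) * Z.of_nat r)%Z with (j * Z.of_nat r + Z.of_nat r)%Z by ring.
  now apply jump_shift_le.
Qed.

Lemma succ_le_pow3 (m : nat) : (S m <= 3 ^ m)%nat.
Proof. induction m; simpl; lia. Qed.

Lemma mul_pow3_le_pow3_mul (N r : nat) :
  (1 <= N)%nat -> (1 <= r)%nat -> INR r * 3 ^ N <= 3 ^ (N * r).
Proof.
  intros hN hr.
  replace 3 with (INR 3) by (simpl; ring).
  rewrite <- !pow_INR, <- mult_INR. apply le_INR.
  destruct r as [|r]; [lia|].
  replace (N * S r)%nat with (N + N * r)%nat by lia.
  rewrite Nat.pow_add_r.
  pose proof (succ_le_pow3 r).
  assert ((3 ^ r <= 3 ^ (N * r))%nat) by (apply Nat.pow_le_mono_r; nia).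
  nia.
Qed.

Theorem corollary2
  (F dF : R -> R)
  (hF : forall x, derivable_pt_lim F x (dF x))
  (hdF : continuity dF)
  (a h Dt : R) (N r : nat) (u0 : R -> R)
  (hh : 0 < h) (hDt : 0 < Dt) (hN : (1 < N)%nat)
  (hr_even : Nat.Even r) (hr2 : (2 <= r)%nat)
  (hCFL_coarse : CFL dF h Dt (coarse_init u0 a h))
  (hCFL_fine : CFL dF (h / INR r) (Dt / INR r) (fine_init u0 a h r))
  (eps : R) (heps : 0 < eps)
  (hinit : forall i : Z,
      Rabs (fine dF u0 a h Dt r 0 i - fine dF u0 a h Dt r 0 (i + 1)%Z)
        <= eps / 3 ^ (N * r)) :
  forall j : Z,
    Rabs (coarse dF u0 a h Dt N j - coarse dF u0 a h Dt N (j + 1)%Z) <= eps.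
Proof.
  intro j.
  pose proof (coarse_init_jump_le u0 a h r _ ltac:(lia) hinit) as hw0.
  pose proof (efc_jump_le_pow3 dF h Dt _ hh hDt hCFL_coarse _ hw0 N j) as hwN.
  pose proof (mul_pow3_le_pow3_mul N r ltac:(lia) ltac:(lia)) as hpow.
  assert (hpos : 0 < 3 ^ (N * r)) by (apply pow_lt; lra).
  unfold coarse. eapply Rle_trans; [exact hwN|].
  replace (3 ^ N * (INR r * (eps / 3 ^ (N * r))))
    with (INR r * 3 ^ N / 3 ^ (N * r) * eps) by (field; lra).
  rewrite <- (Rmult_1_l eps) at 2.
  apply Rmult_le_compat_r; [lra|].
  apply (Rmult_le_reg_r (3 ^ (N * r))); auto.
  unfold Rdiv. rewrite Rmult_assoc, Rinv_l, Rmult_1_r, Rmult_1_l; lra.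
Qed.
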